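(* Let $q\ge2$ and let $U$ be a dual-unitary operator on $\mathbb{C}^q\otimes\mathbb{C}^q$. Then $$\|\mathcal{M}_+^U\|_2^2=\|\mathcal{M}_-^U\|_2^2=1+(q^2-1)\bigl(1-e_p(U)\bigr),\qquad \|\mathcal{M}_+^U-\mathcal{P}\|_2^2=(q^2-1)\bigl(1-e_p(U)\bigr),$$ where $\mathcal{P}(a)=\operatorname{tr}(a)I/q$. In particular these norms are unchanged when $U$ is replaced by $(u_1\otimes u_2)U(v_1\otimes v_2)$ for any single-site unitaries $u_i,v_i\in U(q)$.
   Context: Product basis $|i\alpha\rangle=|i\rangle\otimes|\alpha\rangle$ of $\mathbb{C}^q\otimes\mathbb{C}^q$. For an operator $X$ define the realignment $\langle\beta\alpha|X^{R_1}|ji\rangle=\langle i\alpha|X|j\beta\rangle$. A unitary $U$ is dual-unitary if $U^{R_1}$ is unitary. $S$ is the swap, $S|\phi\rangle|\psi\rangle=|\psi\rangle|\phi\rangle$. The operator entanglement is $E(U)=1-q^{-4}\operatorname{tr}[(U^{R_1}U^{R_1\dagger})^2]$ and the entangling power is $e_p(U)=\frac{E(U)+E(US)-E(S)}{E(S)}$ with $E(S)=1-1/q^2$. The maps $\mathcal{M}_+^U(a)=\frac1q\operatorname{tr}_1[U^\dagger(a\otimes I)U]$ and $\mathcal{M}_-^U(a)=\frac1q\operatorname{tr}_2[U^\dagger(I\otimes a)U]$ act on $q\times q$ complex matrices. For a linear map $\mathcal{N}$ on $q\times q$ matrices, $\|\mathcal{N}\|_2^2=\sum_{j,l}\operatorname{tr}[\mathcal{N}(E_{jl})^\dagger\mathcal{N}(E_{jl})]$,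 with $E_{jl}=|j\rangle\langle l|$ the matrix units (Hilbert–Schmidt norm of the map w.r.t. the inner product $\operatorname{tr}(a^\dagger b)$). *)

(* Complex scalars: an arbitrary numClosedFieldType C
   (e.g. algC, or complex R for a real closed field R). *)
From HB Require Import structures.
From mathcomp Require Import all_boot all_order all_algebra.
From mathcomp Require Import sesquilinear spectral.
Set Implicit Arguments. Unset Strict Implicit. Unset Printing Implicit Defensive.
Import Order.TTheory GRing.Theory Num.Theory.
Local Open Scope ring_scope.
Local Open Scope sesquilinear_scope.

Section QuantumDefs.
Variables (C : numClosedFieldType) (q : nat).

(* basis vector |i alpha> = |i> (x) |alpha> of C^q (x) C^q *)
Definition pidx (i a : 'I_q) : 'I_(q * q) := mxvec_index i a.

Definition adj (X : 'M[C]_(q * q)) : 'M[C]_(q * q) := X ^t*.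
Definition adjq (X : 'M[C]_q) : 'M[C]_q := X ^t*.

Definition kron (A B : 'M[C]_q) : 'M[C]_(q * q) :=
  \sum_(i < q) \sum_(j < q) \sum_(a < q) \sum_(b < q)
     (A i j * B a b) *: delta_mx (pidx i a) (pidx j b).

Definition realign (X : 'M[C]_(q * q)) : 'M[C]_(q * q) :=
  \sum_(i < q) \sum_(a < q) \sum_(j < q) \sum_(b < q)
     X (pidx i a) (pidx j b) *: delta_mx (pidx b a) (pidx j i).

Definition dual_unitary (U : 'M[C]_(q * q)) : Prop :=
  U \is unitarymx /\ realign U \is unitarymx.

Definition swapq : 'M[C]_(q * q) :=
  \sum_(j < q) \sum_(b < q) delta_mx (pidx b j) (pidx j b).

Definition opEnt (U : 'M[C]_(q * q)) : C :=
  1 - (q%:R ^+ 4)^-1 * \tr ((realign U *m adj (realign U)) ^+ 2).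

Definition entPower (U : 'M[C]_(q * q)) : C :=
  (opEnt U + opEnt (U *m swapq) - opEnt swapq) / opEnt swapq.

Definition ptr1 (X : 'M[C]_(q * q)) : 'M[C]_q :=
  \matrix_(a, b) \sum_(i < q) X (pidx i a) (pidx i b).
Definition ptr2 (X : 'M[C]_(q * q)) : 'M[C]_q :=
  \matrix_(i, j) \sum_(a < q) X (pidx i a) (pidx j a).

Definition Mplus (U : 'M[C]_(q * q)) (x : 'M[C]_q) : 'M[C]_q :=
  q%:R^-1 *: ptr1 (adj U *m kron x 1%:M *m U).
Definition Mminus (U : 'M[C]_(q * q)) (x : 'M[C]_q) : 'M[C]_q :=
  q%:R^-1 *: ptr2 (adj U *m kron 1%:M x *m U).

Definition Pmap (x : 'M[C]_q) : 'M[C]_q := (\tr x / q%:R) *: 1%:M.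

Definition hs2 (N : 'M[C]_q -> 'M[C]_q) : C :=
  \sum_(j < q) \sum_(l < q) \tr (adjq (N (delta_mx j l)) *m N (delta_mx j l)).

End QuantumDefs.

From HB Require Import structures.
From mathcomp Require Import all_boot all_order all_algebra.
From mathcomp Require Import sesquilinear spectral.
From mathcomp Require Import ring.
Set Implicit Arguments. Unset Strict Implicit. Unset Printing Implicit Defensive.
Import Order.TTheory GRing.Theory Num.Theory.
Local Open Scope ring_scope.
Local Open Scope sesquilinear_scope.

(* Since M_+^U is linear, ||M_+^U||_2^2 is the sum of the |M_+^U(E_jl)_mn|^2, and
   q M_+^U(E_jl)_mn is the ((m,j),(n,l)) entry of W^dag W for W = (US)^{R_1}.
   Hence ||M_+^U||_2^2 = q^-2 tr((W W^dag)^2) = q^2 (1 - E(US)) for every U.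
   M_-^U is M_+ of the mirrored gate SUS, and E(SU) = E(US) because (SU)^{R_1}
   is the transpose of (US)^{R_1}.  For dual-unitary U, U^{R_1} and S^{R_1} = S
   are unitary, so E(U) = E(S) = 1 - q^-2, which turns q^2 (1 - E(US)) into
   1 + (q^2 - 1)(1 - e_p(U)).  Subtracting P lowers the norm by exactly 1 because
   M_+^U is unital, and local unitaries act on M_+^U by unitary conjugations of
   its inputs and outputs, which preserve Hilbert-Schmidt norms. *)

Lemma sum_mx1l (R : pzRingType) n (F : 'I_n -> R) i :
  \sum_j (1%:M : 'M[R]_n) i j * F j = F i.
Proof.
rewrite (bigD1 i) //= big1 ?addr0 => [|j /negPf ji]; rewrite mxE ?eqxx ?mul1r //.
by rewrite eq_sym ji mul0r.
Qed.

Lemma sum_mx1r (R : pzRingType) n (F : 'I_n -> R) i :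
  \sum_j F j * (1%:M : 'M[R]_n) j i = F i.
Proof.
rewrite (bigD1 i) //= big1 ?addr0 => [|j /negPf ji]; rewrite mxE ?eqxx ?mulr1 //.
by rewrite ji mulr0.
Qed.

Lemma exchange_big_pairs (V : nmodType) n (F : 'I_n -> 'I_n -> 'I_n -> 'I_n -> V) :
  \sum_i \sum_j \sum_k \sum_l F i j k l = \sum_k \sum_l \sum_i \sum_j F i j k l.
Proof.
rewrite pair_big [RHS]pair_big; under eq_bigr do rewrite pair_big.
by under [RHS]eq_bigr do rewrite pair_big; exact: exchange_big.
Qed.

Lemma mulmx_delta_mxE (R : pzRingType) m n p r (A : 'M[R]_(m, n)) (B : 'M[R]_(p, r))
    j l a b :
  (A *m delta_mx j l *m B) a b = A a j * B l b.
Proof.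
by rewrite -(mul_delta_mx (0 : 'I_1)) mulmxA -colE -mulmxA -rowE mxE big_ord1 !mxE.
Qed.

Lemma linear_matrix_sum_delta (R : pzRingType) (V : lmodType R) m n
    (N : 'M[R]_(m, n) -> V) :
  linear N -> forall x, N x = \sum_i \sum_j x i j *: N (delta_mx i j).
Proof.
move=> linN x.
have N0 : N 0 = 0 by have := linN (-1) 0 0; rewrite scaler0 addr0 scaleN1r addNr.
have ND : {morph N : y z / y + z} by move=> y z; rewrite -[y in LHS]scale1r linN scale1r.
rewrite {1}[x]matrix_sum_delta (big_morph N ND N0); apply: eq_bigr => i _.
rewrite (big_morph N ND N0); apply: eq_bigr => j _.
by rewrite -[_ *: delta_mx _ _]addr0 linN N0 addr0.
Qed.

Section Frobenius.
Variables (C : numClosedFieldType) (n : nat).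
Implicit Types A B P Q : 'M[C]_n.

Definition frob2 A : C := \tr (A^t* *m A).

Lemma frob2E A : frob2 A = \sum_i \sum_j (A i j)^* * A i j.
Proof.
rewrite /frob2 /mxtrace exchange_big; apply: eq_bigr => j _.
by rewrite mxE; apply: eq_bigr => i _; rewrite !mxE.
Qed.

Lemma frob2B A B :
  frob2 (A - B) = frob2 A - \tr (A^t* *m B) - \tr (B^t* *m A) + frob2 B.
Proof.
rewrite /frob2; have -> : (A - B)^t* = A^t* - B^t* by rewrite (raddfB (@trmx C n n)) map_mxB.
by rewrite mulmxBl !mulmxBr !raddfB /=; ring.
Qed.

Lemma frob2_unitary_mul P A Q :
  P \is unitarymx -> Q \is unitarymx -> frob2 (P *m A *m Q) = frob2 A.
Proof.
move=> uP /unitarymxP uQ; rewrite /frob2 !trmx_mul !map_mxM !mulmxA mulmxKtV //.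
by rewrite mxtrace_mulC !mulmxA uQ mul1mx.
Qed.

Lemma mxtrace_tC_mulC A B : \tr (A^t* *m B) = (\tr (B^t* *m A))^*.
Proof. by rewrite -trace_map_mx -[RHS]mxtrace_tr map_trmx trmx_mul map_mxM trmxCK. Qed.

Lemma mxtrace_sqr_trmx A : \tr ((A^T *m (A^T)^t*) ^+ 2) = \tr ((A *m A^t*) ^+ 2).
Proof.
have -> : A^T *m (A^T)^t* = (A^t* *m A)^T by rewrite trmx_mul map_trmx.
rewrite expr2 -mulmxE -trmx_mul mxtrace_tr !mulmxA mxtrace_mulC !mulmxA.
by rewrite expr2 -mulmxE !mulmxA.
Qed.

End Frobenius.

Section TensorIndex.
Variables (C : numClosedFieldType) (q : nat).
Implicit Types (A B : 'M[C]_q) (X Y : 'M[C]_(q * q)).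

Lemma eq_pidx (i a j b : 'I_q) : (pidx i a == pidx j b) = (i == j) && (a == b).
Proof.
rewrite /pidx /mxvec_index; apply/eqP/andP => [/cast_ord_inj/enum_rank_inj[-> ->]|].
  by rewrite !eqxx.
by case=> /eqP-> /eqP->.
Qed.

Lemma big_pidx (V : nmodType) (F : 'I_(q * q) -> V) :
  \sum_k F k = \sum_i \sum_a F (pidx i a).
Proof. by rewrite (reindex _ (curry_mxvec_bij q q)) pair_bigA; apply: eq_bigr => -[]. Qed.

Lemma pidx_matrixP X Y :
  (forall i a j b, X (pidx i a) (pidx j b) = Y (pidx i a) (pidx j b)) -> X = Y.
Proof.
by move=> eqXY; apply/matrixP => k l; case/mxvec_indexP: k => i a;
  case/mxvec_indexP: l => j b; apply: eqXY.
Qed.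

Lemma sum_delta_pidxE (F : 'I_q -> 'I_q -> 'I_q -> 'I_q -> C) i a j b :
  (\sum_i' \sum_a' \sum_j' \sum_b' F i' a' j' b' *: delta_mx (pidx i' a') (pidx j' b'))
    (pidx i a) (pidx j b) = F i a j b.
Proof.
pose unp k := enum_val (cast_ord (esym (mxvec_cast q q)) k) : 'I_q * 'I_q.
have unpK i' a' : unp (pidx i' a') = (i', a') by rewrite /unp cast_ordK enum_rankK.
pose M := \matrix_(k, l) F (unp k).1 (unp k).2 (unp l).1 (unp l).2.
suff -> : \sum_i' \sum_a' \sum_j' \sum_b' F i' a' j' b' *: delta_mx (pidx i' a') (pidx j' b')
   = M :> 'M[C]_(q * q) by rewrite mxE !unpK.
rewrite [RHS]matrix_sum_delta big_pidx; apply: eq_bigr => i' _; apply: eq_bigr => a' _.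
by rewrite big_pidx; apply: eq_bigr => j' _; apply: eq_bigr => b' _; rewrite mxE !unpK.
Qed.

Lemma mulmx_pidxE X Y k l : (X *m Y) k l = \sum_i \sum_a X k (pidx i a) * Y (pidx i a) l.
Proof. by rewrite mxE big_pidx. Qed.

Lemma mx1_pidxE i a j b :
  (1%:M : 'M[C]_(q * q)) (pidx i a) (pidx j b) = (1%:M : 'M[C]_q) i j * (1%:M : 'M[C]_q) a b.
Proof. by rewrite !mxE eq_pidx -natrM mulnb. Qed.

Lemma kronE A B i a j b : kron A B (pidx i a) (pidx j b) = A i j * B a b.
Proof. by rewrite /kron; under eq_bigr do rewrite exchange_big; rewrite sum_delta_pidxE. Qed.

Lemma realignE X i a j b : realign X (pidx b a) (pidx j i) = X (pidx i a) (pidx j b).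
Proof.
rewrite /realign exchange_big; under eq_bigr do rewrite exchange_big.
under eq_bigr do under eq_bigr do rewrite exchange_big.
under eq_bigr do rewrite exchange_big.
by rewrite exchange_big sum_delta_pidxE.
Qed.

Lemma swapqE i a j b :
  swapq C q (pidx i a) (pidx j b) = (1%:M : 'M[C]_(q * q)) (pidx a i) (pidx j b).
Proof.
rewrite /swapq summxE; under eq_bigr do rewrite summxE.
under eq_bigr do under eq_bigr do rewrite mxE !eq_pidx.
rewrite (bigD1 a) //= [X in _ + X]big1 ?addr0 => [|j' /negPf j'a]; last first.
  by apply: big1 => b' _; rewrite [a == j']eq_sym j'a andbF.
rewrite (bigD1 i) //= [X in _ + X]big1 ?addr0 => [|b' /negPf b'i]; last first.
  by rewrite eq_sym b'i.
by rewrite mxE !eq_pidx !eqxx [j == a]eq_sym [b == i]eq_sym.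
Qed.

Lemma mul_swapq_mxE X i a l : (swapq C q *m X) (pidx i a) l = X (pidx a i) l.
Proof.
rewrite mxE -[RHS](sum_mx1l (fun r => X r l)); apply: eq_bigr => r _.
by case/mxvec_indexP: r => j b; rewrite swapqE.
Qed.

Lemma mulmx_swapqE X k j b : (X *m swapq C q) k (pidx j b) = X k (pidx b j).
Proof.
rewrite mxE -[RHS](sum_mx1r (fun r => X k r)); apply: eq_bigr => r _.
case/mxvec_indexP: r => i a; rewrite swapqE !mx1_pidxE.
by rewrite [1%:M a j * _]mulrC.
Qed.

End TensorIndex.

Section Kron.
Variables (C : numClosedFieldType) (q : nat).
Implicit Types (A B v w : 'M[C]_q) (X Y : 'M[C]_(q * q)).

Lemma kron_tC A B : (kron A B)^t* = kron (A^t*) (B^t*).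
Proof. by apply: pidx_matrixP => i a j b; rewrite !mxE !kronE !mxE rmorphM. Qed.

Lemma kronM A B A' B' : kron A B *m kron A' B' = kron (A *m A') (B *m B').
Proof.
apply: pidx_matrixP => i a j b; rewrite mulmx_pidxE kronE !mxE big_distrl.
apply: eq_bigr => k _; rewrite big_distrr; apply: eq_bigr => c _.
by rewrite !kronE mulrACA.
Qed.

Lemma kron1 : kron (1%:M : 'M[C]_q) 1%:M = 1%:M.
Proof. by apply: pidx_matrixP => i a j b; rewrite kronE mx1_pidxE. Qed.

Lemma kron_unitary A B :
  A \is unitarymx -> B \is unitarymx -> kron A B \is unitarymx.
Proof.
by move=> /unitarymxP uA /unitarymxP uB; apply/unitarymxP; rewrite kron_tC kronM uA uB kron1.
Qed.

Lemma kronDZl c A A' B : kron (c *: A + A') B = c *: kron A B + kron A' B.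
Proof. by apply: pidx_matrixP => i a j b; rewrite !mxE !kronE !mxE mulrDl mulrA. Qed.

Lemma mul_kron1x_mxE B X i a l :
  (kron 1%:M B *m X) (pidx i a) l = \sum_b B a b * X (pidx i b) l.
Proof.
rewrite mulmx_pidxE; under eq_bigr do under eq_bigr do rewrite kronE -mulrA.
by under eq_bigr do rewrite -big_distrr; rewrite sum_mx1l.
Qed.

Lemma mul_kronx1_mxE A X i a l :
  (kron A 1%:M *m X) (pidx i a) l = \sum_j A i j * X (pidx j a) l.
Proof.
rewrite mulmx_pidxE; under eq_bigr do under eq_bigr do rewrite kronE -mulrA.
by under eq_bigr do rewrite -big_distrr sum_mx1l.
Qed.

Lemma mulmx_kron1xE B X k j b :
  (X *m kron 1%:M B) k (pidx j b) = \sum_a X k (pidx j a) * B a b.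
Proof.
rewrite mulmx_pidxE exchange_big.
under eq_bigr do under eq_bigr do rewrite kronE mulrA mulrAC.
by under eq_bigr do rewrite sum_mx1r.
Qed.

Lemma mulmx_kronx1E A X k j b :
  (X *m kron A 1%:M) k (pidx j b) = \sum_i X k (pidx i b) * A i j.
Proof.
rewrite mulmx_pidxE; under eq_bigr do under eq_bigr do rewrite kronE mulrA.
by under eq_bigr do rewrite sum_mx1r.
Qed.

Lemma mulmx_kron_delta1E X Y j l x y :
  (X *m kron (delta_mx j l) 1%:M *m Y) x y = \sum_a X x (pidx j a) * Y (pidx l a) y.
Proof.
have deltaE i c : delta_mx j l i c = (1%:M : 'M[C]_q) i j * (1%:M : 'M[C]_q) c l.
  by rewrite !mxE -natrM mulnb.
rewrite mulmx_pidxE exchange_big; apply: eq_bigr => a _.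
under eq_bigr do rewrite mulmx_kronx1E.
under eq_bigr do under eq_bigr do rewrite deltaE mulrA.
by under eq_bigr do rewrite -big_distrl sum_mx1r mulrAC; rewrite sum_mx1r.
Qed.

Lemma ptr1_kron1x v w X : ptr1 (kron 1%:M v *m X *m kron 1%:M w) = v *m ptr1 X *m w.
Proof.
apply/matrixP => a b; rewrite !mxE.
under eq_bigr do rewrite mulmx_kron1xE.
under eq_bigr do under eq_bigr do rewrite mul_kron1x_mxE big_distrl.
under [RHS]eq_bigr do rewrite mxE big_distrl.
under [RHS]eq_bigr do under eq_bigr do rewrite mxE big_distrr big_distrl.
rewrite exchange_big; apply: eq_bigr => c _.
by rewrite exchange_big.
Qed.

Lemma ptr1_kronx1_mulC w X : ptr1 (kron w 1%:M *m X) = ptr1 (X *m kron w 1%:M).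
Proof.
apply/matrixP => a b; rewrite !mxE.
under eq_bigr do rewrite mul_kronx1_mxE.
under [RHS]eq_bigr do rewrite mulmx_kronx1E.
rewrite [RHS]exchange_big; apply: eq_bigr => i _; apply: eq_bigr => j _.
exact: mulrC.
Qed.

End Kron.

Section HilbertSchmidt.
Variables (C : numClosedFieldType) (q : nat).
Implicit Types N : 'M[C]_q -> 'M[C]_q.

Lemma hs2_frob2 N : hs2 N = \sum_j \sum_l frob2 (N (delta_mx j l)).
Proof. by []. Qed.

Lemma eq_hs2 N N' : N =1 N' -> hs2 N = hs2 N'.
Proof. by move=> eqN; rewrite !hs2_frob2; under eq_bigr do under eq_bigr do rewrite eqN. Qed.

Lemma hs2_postconj_unitary N v :
  v \is unitarymx -> hs2 (fun x => v^t* *m N x *m v) = hs2 N.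
Proof.
move=> uv; rewrite !hs2_frob2; apply: eq_bigr => j _; apply: eq_bigr => l _.
by rewrite frob2_unitary_mul ?trmxC_unitary.
Qed.

Lemma hs2_entries N : hs2 N = \sum_m \sum_n frob2 (\matrix_(j, l) N (delta_mx j l) m n).
Proof.
rewrite hs2_frob2; under eq_bigr do under eq_bigr do rewrite frob2E.
rewrite exchange_big_pairs; apply: eq_bigr => m _; apply: eq_bigr => n _.
by rewrite frob2E; apply: eq_bigr => j _; apply: eq_bigr => l _; rewrite mxE.
Qed.

(* Entrywise, precomposing N with x |-> u^dag x u maps the matrix
   G = (N(E_jl)_mn)_jl to conj(u) G u^T, with both factors unitary. *)
Lemma hs2_preconj_unitary N u :
  linear N -> u \is unitarymx -> hs2 (fun x => N (u^t* *m x *m u)) = hs2 N.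
Proof.
move=> linN uu; rewrite !hs2_entries; apply: eq_bigr => m _; apply: eq_bigr => n _.
rewrite -[RHS](@frob2_unitary_mul _ _ (map_mx Num.conj u) _ u^T) ?conjC_unitary ?trmx_unitary //.
congr frob2; apply/matrixP => j l; rewrite mxE (linear_matrix_sum_delta linN).
rewrite summxE mxE; under [RHS]eq_bigr do rewrite mxE big_distrl.
rewrite [RHS]exchange_big; apply: eq_bigr => a _; rewrite summxE; apply: eq_bigr => b _.
by rewrite mxE mulmx_delta_mxE !mxE mulrAC.
Qed.

End HilbertSchmidt.

Section Mplus.
Variables (C : numClosedFieldType) (q : nat).
Implicit Types (U X : 'M[C]_(q * q)) (x : 'M[C]_q).

Local Notation W U := (realign (U *m swapq C q)).

Lemma ptr1_is_linear : linear (@ptr1 C q).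
Proof.
move=> c X Y; apply/matrixP => a b; rewrite !mxE mulr_sumr -big_split /=.
by apply: eq_bigr => i _; rewrite !mxE.
Qed.

Lemma Mplus_is_linear U : linear (Mplus U).
Proof.
move=> c x y; rewrite /Mplus kronDZl mulmxDr mulmxDl -scalemxAr -scalemxAl.
by rewrite ptr1_is_linear scalerDr !scalerA mulrC.
Qed.

Lemma ptr1_1 : ptr1 (1%:M : 'M[C]_(q * q)) = q%:R *: 1%:M.
Proof.
apply/matrixP => a b; rewrite !mxE; under eq_bigr do rewrite mx1_pidxE.
by rewrite -big_distrl -/(\tr 1%:M) mxtrace1 mxE.
Qed.

Lemma Mplus1 U : (0 < q)%N -> U \is unitarymx -> Mplus U 1%:M = 1%:M.
Proof.
move=> q_gt0 uU; rewrite /Mplus kron1 mulmx1 -[adj U]mul1mx mulmxKtV // ptr1_1.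
by rewrite scalerA mulVf ?scale1r // pnatr_eq0 -lt0n.
Qed.

Lemma Mplus_kron U u1 u2 v1 v2 x : u2 \is unitarymx -> v1 \is unitarymx ->
  Mplus (kron u1 u2 *m U *m kron v1 v2) x = v2^t* *m Mplus U (u1^t* *m x *m u1) *m v2.
Proof.
move=> uu2 /unitarymxP uv1; rewrite /Mplus /adj !trmx_mul !map_mxM !kron_tC.
set Y := U^t* *m kron (u1^t* *m x *m u1) 1%:M *m U.
have -> : kron (v1^t*) (v2^t*) *m (U^t* *m kron (u1^t*) (u2^t*)) *m kron x 1%:M *m
    (kron u1 u2 *m U *m kron v1 v2)
    = kron 1%:M (v2^t*) *m (kron (v1^t*) 1%:M *m (Y *m kron v1 1%:M)) *m kron 1%:M v2.
  have mid : kron (u1^t*) (u2^t*) *m kron x 1%:M *m kron u1 u2 = kron (u1^t* *m x *m u1) 1%:M.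
    by rewrite !kronM mulmx1 -[u2^t*]mul1mx mulmxKtV.
  rewrite /Y -mid !mulmxA kronM mul1mx mulmx1.
  by rewrite -[_ *m kron v1 1%:M *m kron 1%:M v2]mulmxA kronM mul1mx mulmx1.
rewrite ptr1_kron1x ptr1_kronx1_mulC -[Y *m _ *m _]mulmxA kronM uv1 mulmx1 kron1 mulmx1.
by rewrite -scalemxAr -scalemxAl.
Qed.

Lemma Mplus_deltaE U j l m n :
  Mplus U (delta_mx j l) m n = q%:R^-1 * ((W U)^t* *m W U) (pidx m j) (pidx n l).
Proof.
rewrite mulmx_pidxE /Mplus !mxE; congr (_ * _); apply: eq_bigr => b _.
rewrite mulmx_kron_delta1E; apply: eq_bigr => a _.
by rewrite !mxE !realignE !mulmx_swapqE.
Qed.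

Lemma frob2_pidxE X :
  frob2 X = \sum_i \sum_a \sum_j \sum_b (X (pidx i a) (pidx j b))^* * X (pidx i a) (pidx j b).
Proof.
rewrite frob2E big_pidx; apply: eq_bigr => i _; apply: eq_bigr => a _.
by rewrite big_pidx.
Qed.

Lemma hs2_Mplus U : (0 < q)%N -> hs2 (Mplus U) = q%:R ^+ 2 * (1 - opEnt (U *m swapq C q)).
Proof.
move=> q_gt0; have qn0 : q%:R != 0 :> C by rewrite pnatr_eq0 -lt0n.
have -> : hs2 (Mplus U) = (q%:R ^+ 2)^-1 * frob2 ((W U)^t* *m W U).
  rewrite hs2_frob2 frob2_pidxE mulr_sumr; under eq_bigr do under eq_bigr do rewrite frob2E.
  rewrite exchange_big_pairs; apply: eq_bigr => m _; rewrite mulr_sumr exchange_big.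
  apply: eq_bigr => j _; rewrite mulr_sumr; apply: eq_bigr => n _; rewrite mulr_sumr.
  apply: eq_bigr => l _; rewrite !Mplus_deltaE rmorphM fmorphV /= conjC_nat.
  by rewrite mulrACA -expr2 exprVn.
have -> : frob2 ((W U)^t* *m W U) = \tr ((W U *m (W U)^t*) ^+ 2).
  by rewrite /frob2 trmx_mul map_mxM trmxCK expr2 -mulmxE !mulmxA mxtrace_mulC !mulmxA.
by rewrite /opEnt; field.
Qed.

End Mplus.

Section Swap.
Variables (C : numClosedFieldType) (q : nat).
Implicit Types (U X : 'M[C]_(q * q)) (x A B : 'M[C]_q).
Local Notation S := (swapq C q).

Lemma swapq_tC : S^t* = S.
Proof.
apply: pidx_matrixP => i a j b; rewrite !mxE !swapqE !mx1_pidxE !mxE rmorphM /=.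
by rewrite !conjC_nat mulrC [b == i]eq_sym [j == a]eq_sym.
Qed.

Lemma swapqK : S *m S = 1%:M.
Proof. by apply: pidx_matrixP => i a j b; rewrite mul_swapq_mxE !swapqE !mx1_pidxE mulrC. Qed.

Lemma swapq_unitary : S \is unitarymx.
Proof. by apply/unitarymxP; rewrite swapq_tC swapqK. Qed.

Lemma swapq_kron A B : S *m kron A B *m S = kron B A.
Proof.
by apply: pidx_matrixP => i a j b; rewrite mulmx_swapqE mul_swapq_mxE !kronE mulrC.
Qed.

Lemma realign_swapq : realign S = S.
Proof.
apply: pidx_matrixP => b a j i; rewrite realignE !swapqE !mx1_pidxE.
by rewrite !mxE [i == b]eq_sym.
Qed.

Lemma realign_swapq_mul X : realign (S *m X) = (realign (X *m S))^T.
Proof.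
by apply: pidx_matrixP => b a j i; rewrite mxE !realignE mul_swapq_mxE mulmx_swapqE.
Qed.

Lemma ptr2_swapq X : ptr2 X = ptr1 (S *m X *m S).
Proof.
apply/matrixP => i j; rewrite !mxE; apply: eq_bigr => a _.
by rewrite mulmx_swapqE mul_swapq_mxE.
Qed.

Lemma Mminus_swapq U x : Mminus U x = Mplus (S *m U *m S) x.
Proof.
rewrite /Mminus /Mplus ptr2_swapq /adj !trmx_mul !map_mxM swapq_tC.
by congr (_ *: ptr1 _); rewrite -(swapq_kron x 1%:M) !mulmxA.
Qed.

Lemma opEnt_swapqC U : opEnt (S *m U) = opEnt (U *m S).
Proof. by rewrite /opEnt /adj realign_swapq_mul mxtrace_sqr_trmx. Qed.

Lemma hs2_Mminus U : (0 < q)%N -> hs2 (Mminus U) = q%:R ^+ 2 * (1 - opEnt (U *m S)).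
Proof.
move=> q_gt0; rewrite (eq_hs2 (Mminus_swapq U)) hs2_Mplus // -mulmxA swapqK mulmx1.
by rewrite opEnt_swapqC.
Qed.

End Swap.

Section Projector.
Variables (C : numClosedFieldType) (q : nat).
Hypothesis q_gt0 : (0 < q)%N.
Implicit Types N : 'M[C]_q -> 'M[C]_q.

Let qn0 : q%:R != 0 :> C. Proof. by rewrite pnatr_eq0 -lt0n. Qed.

Lemma Pmap_is_linear : linear (@Pmap C q).
Proof.
by move=> c x y; rewrite /Pmap mxtraceD mxtraceZ mulrDl scalerDl scalerA mulrA.
Qed.

Lemma Pmap1 : Pmap (1%:M : 'M[C]_q) = 1%:M.
Proof. by rewrite /Pmap mxtrace1 mulfV ?scale1r. Qed.

Lemma sum_tr_Pmap_mul N : linear N -> N 1%:M = 1%:M ->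
  \sum_j \sum_l \tr ((Pmap (delta_mx j l))^t* *m N (delta_mx j l)) = 1.
Proof.
move=> linN N1.
have PmapE (j l : 'I_q) : (Pmap (delta_mx j l : 'M[C]_q))^t* = (1%:M j l / q%:R)%:M.
  rewrite /Pmap -[delta_mx j l]mul1mx -[_ *m _]mulmx1 /mxtrace.
  under eq_bigr do rewrite mulmx_delta_mxE mulrC.
  by rewrite sum_mx1r scalemx1 tr_scalar_mx map_scalar_mx !mxE fmorph_div /= !conjC_nat eq_sym.
transitivity (q%:R^-1 * \tr (N 1%:M)); last by rewrite N1 mxtrace1 mulVf.
rewrite [N 1%:M](linear_matrix_sum_delta linN) raddf_sum /= mulr_sumr.
apply: eq_bigr => j _; rewrite raddf_sum /= mulr_sumr; apply: eq_bigr => l _.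
by rewrite PmapE mul_scalar_mx !mxtraceZ mulrAC mulrC.
Qed.

Lemma hs2_sub_Pmap N : linear N -> N 1%:M = 1%:M ->
  hs2 (fun x => N x - Pmap x) = hs2 N - 1.
Proof.
move=> linN N1; rewrite !hs2_frob2.
under eq_bigr do under eq_bigr do rewrite frob2B [\tr (_^t* *m Pmap _)]mxtrace_tC_mulC.
under eq_bigr do rewrite big_split /= !sumrB.
rewrite big_split /= !sumrB (sum_tr_Pmap_mul linN N1) (sum_tr_Pmap_mul Pmap_is_linear Pmap1).
rewrite [X in _ - X - _](_ : _ = 1) ?subrK //.
rewrite -[RHS]conjC1 -(sum_tr_Pmap_mul linN N1) rmorph_sum; apply: eq_bigr => j _.
by rewrite rmorph_sum.
Qed.

Lemma hs2_sub_Pmap_Mplus (U : 'M[C]_(q * q)) : U \is unitarymx ->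
  hs2 (fun x => Mplus U x - Pmap x) = hs2 (Mplus U) - 1.
Proof. by move=> uU; rewrite hs2_sub_Pmap ?Mplus1 //; exact: Mplus_is_linear. Qed.

End Projector.

Lemma opEnt_realign_unitary (C : numClosedFieldType) q (U : 'M[C]_(q * q)) :
  realign U \is unitarymx -> opEnt U = 1 - (q%:R ^+ 2)^-1.
Proof.
move=> /unitarymxP uR; rewrite /opEnt uR expr2 -mulmxE mulmx1 mxtrace1 natrM -expr2.
rewrite -[4%N]/(2 * 2)%N exprM expr2 invfM; congr (1 - _).
have [->|q2n0] := eqVneq (q%:R ^+ 2 : C) 0; first by rewrite invr0 !mul0r.
by rewrite mulfVK.
Qed.

Lemma entPower_dual_unitary (C : numClosedFieldType) q (U : 'M[C]_(q * q)) :
  (1 < q)%N -> dual_unitary U ->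
  1 + (q%:R ^+ 2 - 1) * (1 - entPower U) = q%:R ^+ 2 * (1 - opEnt (U *m swapq C q)).
Proof.
move=> q_gt1 [_ uR]; have qn0 : q%:R != 0 :> C by rewrite pnatr_eq0 -lt0n ltnW.
have q21 : q%:R ^+ 2 - 1 != 0 :> C.
  by rewrite subr_eq0 -natrX pnatr_eq1 gtn_eqF // (leq_trans q_gt1) // leq_pmulr // ltnW.
have uS : realign (swapq C q) \is unitarymx by rewrite realign_swapq swapq_unitary.
rewrite /entPower (opEnt_realign_unitary uR) (opEnt_realign_unitary uS).
by field; rewrite q21 qn0.
Qed.

Lemma hs2_Mplus_kron (C : numClosedFieldType) q (U : 'M[C]_(q * q)) u1 u2 v1 v2 :
  u1 \is unitarymx -> u2 \is unitarymx -> v1 \is unitarymx -> v2 \is unitarymx ->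
  hs2 (Mplus (kron u1 u2 *m U *m kron v1 v2)) = hs2 (Mplus U).
Proof.
move=> uu1 uu2 uv1 uv2.
rewrite (@eq_hs2 _ _ _ (fun x => v2^t* *m Mplus U (u1^t* *m x *m u1) *m v2)) => [|x].
  by rewrite hs2_postconj_unitary // hs2_preconj_unitary //; exact: Mplus_is_linear.
exact: Mplus_kron.
Qed.

Lemma hs2_Mminus_kron (C : numClosedFieldType) q (U : 'M[C]_(q * q)) u1 u2 v1 v2 :
  u1 \is unitarymx -> u2 \is unitarymx -> v1 \is unitarymx -> v2 \is unitarymx ->
  hs2 (Mminus (kron u1 u2 *m U *m kron v1 v2)) = hs2 (Mminus U).
Proof.
move=> uu1 uu2 uv1 uv2; rewrite !(eq_hs2 (Mminus_swapq _)).
set S := swapq C q; have SSK X : X *m S *m S = X by rewrite -mulmxA swapqK mulmx1.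
rewrite -(hs2_Mplus_kron (S *m U *m S) uu2 uu1 uv2 uv1).
by rewrite -(swapq_kron u1 u2) -(swapq_kron v1 v2) !mulmxA !SSK.
Qed.

Theorem mainTheorem2 (C : numClosedFieldType) (q : nat) (hq : (2 <= q)%N)
    (U : 'M[C]_(q * q)) (hU : dual_unitary U) :
  [/\ hs2 (Mplus U) = 1 + (q%:R ^+ 2 - 1) * (1 - entPower U),
      hs2 (Mminus U) = 1 + (q%:R ^+ 2 - 1) * (1 - entPower U),
      hs2 (fun x => Mplus U x - Pmap x) = (q%:R ^+ 2 - 1) * (1 - entPower U)
    & forall u1 u2 v1 v2 : 'M[C]_q,
        u1 \is unitarymx -> u2 \is unitarymx ->
        v1 \is unitarymx -> v2 \is unitarymx ->
        let U' := kron u1 u2 *m U *m kron v1 v2 in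
        [/\ hs2 (Mplus U') = hs2 (Mplus U),
            hs2 (Mminus U') = hs2 (Mminus U)
          & hs2 (fun x => Mplus U' x - Pmap x) = hs2 (fun x => Mplus U x - Pmap x)]].
Proof.
have q_gt0 : (0 < q)%N by apply: ltnW.
have uU : U \is unitarymx by case: hU.
have hs2_MplusU : hs2 (Mplus U) = 1 + (q%:R ^+ 2 - 1) * (1 - entPower U).
  by rewrite hs2_Mplus // entPower_dual_unitary.
split=> [||| u1 u2 v1 v2 uu1 uu2 uv1 uv2 U'].
- exact: hs2_MplusU.
- by rewrite hs2_Mminus // entPower_dual_unitary.
- by rewrite hs2_sub_Pmap_Mplus // hs2_MplusU addrAC subrr add0r.
- have uU' : U' \is unitarymx by rewrite !mul_unitarymx ?kron_unitary.
  by rewrite !hs2_sub_Pmap_Mplus // /U' hs2_Mplus_kron // hs2_Mminus_kron.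
Qed.
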